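(* Let $A\in\mathbb{R}^{n\times n}$, ${\mathbf w}\in\mathbb{R}^n$, $T>0$, and let $D$ be a linear differential operator in the time variable $t$ (for instance $\frac{\mathrm d}{\mathrm dt}$ or $\frac{\mathrm d^2}{\mathrm dt^2}$), acting componentwise on vector-valued functions. Let $\mathcal{V}_1\subseteq\dots\subseteq\mathcal{V}_m\subseteq\mathcal{V}_{m+1}\subseteq\mathbb{R}^n$ be nested subspaces with $d_i=\dim(\mathcal{V}_i)$ ($d_0=0$), such that ${\mathbf w}\in\mathcal{V}_1$ and $A\mathcal{V}_i\subseteq\mathcal{V}_{i+1}$ for all $i=1,\dots,m$. Let $\langle\cdot,\cdot\rangle_\ast$ be an inner product on $\mathcal{V}_{m+1}$ with induced norm $\|\cdot\|_\ast$, and let $U_{m+1}=[\mathcal{U}_1,\dots,\mathcal{U}_{m+1}]$, $\mathcal{U}_j\in\mathbb{R}^{n\times b_j}$, $b_j=d_j-d_{j-1}$, be a nested $\langle\cdot,\cdot\rangle_\ast$-orthonormal basis of $\mathcal{V}_{m+1}$, i.e. $U_i=[\mathcal{U}_1,\dots,\mathcal{U}_i]$ is a $\langle\cdot,\cdot\rangle_\ast$-orthonormal basis of $\mathcal{V}_i$ for each $i\le m+1$. Let ${\mathbf y}_m:[0,T]\to\mathcal{V}_m$ be a (sufficiently differentiable) function whose residual ${\mathbf r}_m(t):=-D{\mathbf y}_m(t)-A{\mathbf y}_m(t)+{\mathbf w}$ satisfies $\langle{\mathbf v},{\mathbf r}_m(t)\rangle_\ast=0$ for all ${\mathbf v}\in\mathcal{V}_m$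 and all $t\in[0,T]$, and write ${\mathbf y}_m(t)=U_m{\mathbf x}_m(t)$ with ${\mathbf x}_m:[0,T]\to\mathbb{R}^{d_m}$. Define $\boldsymbol{\beta}_m(t) = -\,\mathcal{U}_{m+1}^\ast A\,\mathcal{U}_m\,[{\mathbf x}_m(t)]_{d_{m-1}+1:d_m}$. Then for all $t\in[0,T]$, \[ \|{\mathbf r}_m(t)\|_\ast = \|\boldsymbol{\beta}_m(t)\|, \] where $\|\cdot\|$ is the Euclidean norm.
   Context: For a matrix $W=[{\mathbf w}_1,\dots,{\mathbf w}_k]$ with columns in $\mathcal{V}_{m+1}$, $W^\ast$ denotes the adjoint with respect to $\langle\cdot,\cdot\rangle_\ast$: it maps ${\mathbf x}\in\mathcal{V}_{m+1}$ to $(\langle{\mathbf w}_1,{\mathbf x}\rangle_\ast,\dots,\langle{\mathbf w}_k,{\mathbf x}\rangle_\ast)^{\top}$; so $\mathcal{U}_{m+1}^\ast A\,\mathcal{U}_m$ is the $b_{m+1}\times b_m$ matrix with entries $\langle{\mathbf u},A{\mathbf u}'\rangle_\ast$ for columns ${\mathbf u}$ of $\mathcal{U}_{m+1}$ and ${\mathbf u}'$ of $\mathcal{U}_m$. For a vector ${\mathbf v}$, $[{\mathbf v}]_{i:j}$ denotes the subvector of entries $i,\dots,j$. *)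

From HB Require Import structures.
From mathcomp Require Import all_boot all_order all_algebra.
From mathcomp Require Import all_classical all_reals all_analysis.
Set Implicit Arguments. Unset Strict Implicit. Unset Printing Implicit Defensive.
Import Order.TTheory GRing.Theory Num.Theory.
Import numFieldNormedType.Exports.
Local Open Scope ring_scope.

Definition diff_op (R : realType) (n : nat) (K : nat) (c : nat -> R -> R)
    (f : R -> 'cV[R]_n) (t : R) : 'cV[R]_n :=
  \sum_(k < K.+1) c k t *: derive1n k f t.

(* ip is an inner product on the subspace W of R^n: symmetric, bilinear and
   positive definite on W (its values outside W are irrelevant). *)
Definition inner_product_on (R : realType) (n : nat)
    (W : {vspace 'cV[R]_n}) (ip : 'cV[R]_n -> 'cV[R]_n -> R) : Prop :=
  [/\ (forall x y, x \in W -> y \in W -> ip x y = ip y x),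
      (forall a x y z, x \in W -> y \in W -> z \in W ->
          ip (a *: x + y) z = a * ip x z + ip y z)
    & (forall x, x \in W -> x != 0 -> 0 < ip x x)].

Definition ip_norm (R : realType) (n : nat) (ip : 'cV[R]_n -> 'cV[R]_n -> R)
    (x : 'cV[R]_n) : R := Num.sqrt (ip x x).

From HB Require Import structures.
From mathcomp Require Import all_boot all_order all_algebra.
From mathcomp Require Import all_classical all_reals all_analysis.
Import Order.TTheory GRing.Theory Num.Theory.
Import numFieldNormedType.Exports.
Local Open Scope ring_scope.

(* The residual r lies in V_{m+1}: w and D y lie in V_m (a subspace is closed,
   so derivatives of a V_m-valued function stay in V_m) and A y in V_{m+1}.
   Expanding r in the orthonormal basis u, Parseval gives |r|^2 as the sum of
   the squared coefficients <u_l, r>.  The Galerkin condition kills those with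
   l < d_m; for the others <u_l, r> = -<u_l, A y>, and since A maps V_{m-1}
   into V_m, which is orthogonal to u_l, only the last block x_{d_{m-1}..d_m-1}
   of the coordinates of y contributes: this is beta_l. *)

Section SubspaceValuedFunctions.
Context {R : realType} {n : nat}.
Local Open Scope classical_set_scope.

Lemma linear_mx_continuous (p q : nat) (V : normedModType R)
    (f : {linear 'M[R]_(p, q) -> V}) : continuous f.
Proof.
have -> : (f : _ -> _) = fun M => \sum_i \sum_j M i j *: f (delta_mx i j).
  apply/funext => M; rewrite {1}(matrix_sum_delta M) !linear_sum.
  by apply: eq_bigr => i _; rewrite linear_sum; apply: eq_bigr => j _; rewrite linearZ.
apply: continuous_big => [|i _]; first exact: add_continuous.
apply: continuous_big => [|j _ M]; first exact: add_continuous.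
exact/continuousZr_tmp/coord_continuous.
Qed.

Lemma vspace_closed (S : {vspace 'cV[R]_n}) : closed [set v : 'cV[R]_n | v \in S].
Proof.
have -> : [set v | v \in S] = (fun v => v - projv S v) @^-1` [set 0].
  apply/seteqP; split => v /=; first by move=> vS; rewrite projv_id // subrr.
  by move/eqP; rewrite subr_eq0 => /eqP ->; exact: memv_proj.
apply: preimage_closed => [v _|].
  apply: continuousB; first exact: cvg_id.
  by have := @linear_mx_continuous n 1 'cV[R]_n (fun_of_lfun (projv S)); apply.
exact/accessible_closed_set1/hausdorff_accessible/norm_hausdorff.
Qed.

Lemma derive1_in_vspace {S : {vspace 'cV[R]_n}} {f : R -> 'cV[R]_n} {a b t : R} :
  a < b -> (forall s, a <= s <= b -> f s \in S) -> a <= t <= b ->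
  derivable f t 1 -> f^`() t \in S.
Proof.
move=> ab fS /andP[ta tb] df.
have q_cvg : (fun h => h^-1 *: (f (h + t) - f t)) @ 0^' --> f^`() t.
  rewrite derive1E; have -> : (fun h => h^-1 *: (f (h + t) - f t)) =
      (fun h => h^-1 *: ((f \o shift t) (h *: 1) - f t)).
    by apply/funext => h; rewrite /= [h *: 1]mulr1.
  exact: df.
have qS h : a <= h + t <= b -> h^-1 *: (f (h + t) - f t) \in S.
  by move=> htab; rewrite memvZ // memvB // fS // ta tb.
(* the difference quotient stays in S on the side of t lying inside [a, b] *)
case: (ltrP t b) => [tb'|bt].
  apply: (closed_cvg _ (vspace_closed S) _ _ (cvg_dnbhs_at_right q_cvg)).
  near=> h; apply: qS.
  have h0 : 0 < h by near: h; exact: nbhs_right_gt.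
  have hb : h < b - t by near: h; apply: nbhs_right_lt; rewrite subr_gt0.
  apply/andP; split; last by rewrite -lerBrDr ltW.
  by rewrite (le_trans ta) // lerDr ltW.
have at_ : a < t by apply: lt_le_trans bt.
apply: (closed_cvg _ (vspace_closed S) _ _ (cvg_dnbhs_at_left q_cvg)).
near=> h; apply: qS.
have h0 : h < 0 by near: h; exact: nbhs_left_lt.
have ha : a - t < h by near: h; apply: nbhs_left_gt; rewrite subr_lt0.
apply/andP; split; first by rewrite -lerBlDr ltW.
by rewrite (le_trans _ tb) // gerDr ltW.
Unshelve. all: by end_near. Qed.

Lemma derive1n_in_vspace {S : {vspace 'cV[R]_n}} {f : R -> 'cV[R]_n} {a b : R}
    {k : nat} :
  a < b -> (forall s, a <= s <= b -> f s \in S) ->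
  (forall j s, (j < k)%N -> a <= s <= b -> derivable (derive1n j f) s 1) ->
  forall s, a <= s <= b -> derive1n k f s \in S.
Proof.
move=> ab fS; elim: k => [|k IH] df s sab; first exact: fS.
rewrite derive1nS; apply: (derive1_in_vspace ab) => // [s' s'ab|].
  by apply: IH => // j s'' jk; apply: df; exact: ltnW.
exact: df.
Qed.

Lemma diff_op_in_vspace {S : {vspace 'cV[R]_n}} {K : nat} {c : nat -> R -> R}
    {f : R -> 'cV[R]_n} {a b t : R} :
  a < b -> (forall s, a <= s <= b -> f s \in S) ->
  (forall k s, (k < K)%N -> a <= s <= b -> derivable (derive1n k f) s 1) ->
  a <= t <= b -> diff_op K c f t \in S.
Proof.
move=> ab fS df tab; apply: memv_suml => k _; apply: memvZ.
apply: (derive1n_in_vspace ab fS) => // j s jk; apply: df.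
by rewrite (leq_trans jk) // -ltnS.
Qed.

End SubspaceValuedFunctions.

Lemma memv_span_iota (K : fieldType) (vT : vectType K) (u : nat -> vT) (p : nat) v :
  v \in <<[seq u k | k <- iota 0 p]>>%VS ->
  exists a : nat -> K, v = \sum_(k < p) a k *: u k.
Proof.
elim: p v => [|p IH] v.
  by rewrite span_nil memv0 => /eqP ->; exists (fun=> 0); rewrite big_ord0.
rewrite -addn1 iotaD map_cat span_cat span_seq1.
case/memv_addP => _ /IH[a ->] [_ /vlineP[b ->] ->].
exists (fun k => if k == p then b else a k); rewrite addn1 big_ord_recr /= eqxx.
by congr (_ + _); apply: eq_bigr => k _; rewrite ltn_eqF.
Qed.

Lemma subv_chain {K : fieldType} {vT : vectType K} {V : nat -> {vspace vT}}
    {a b i : nat} :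
  (forall j, (a <= j <= b)%N -> (V j <= V j.+1)%VS) ->
  (a <= i <= b.+1)%N -> (V a <= V i)%VS.
Proof.
move=> Vinc; elim: i => [|i IH] /andP[ai ib].
  by move: ai; rewrite leqn0 => /eqP ->.
move: ai; rewrite leq_eqVlt ltnS => /orP[/eqP <-|ai]; first exact: subvv.
have aib : (a <= i <= b)%N by rewrite ai.
by apply: subv_trans (IH _) (Vinc i aib); rewrite ai leqW.
Qed.

Section InnerProduct.
Context {R : realType} {n : nat} {W : {vspace 'cV[R]_n}}.
Context {ip : 'cV[R]_n -> 'cV[R]_n -> R}.
Hypothesis ipW : inner_product_on W ip.

Lemma ip_linear_r a {x y z} : x \in W -> y \in W -> z \in W ->
  ip z (a *: x + y) = a * ip z x + ip z y.
Proof.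
by case: ipW => sym lin _ xW yW zW; rewrite sym ?memvD ?memvZ // lin // !(sym z).
Qed.

Lemma ip0r {z} : z \in W -> ip z 0 = 0.
Proof.
move=> zW; have := ip_linear_r (-1) (mem0v W) (mem0v W) zW.
by rewrite scaler0 addr0 mulN1r addNr.
Qed.

Lemma ipZr a {x z} : x \in W -> z \in W -> ip z (a *: x) = a * ip z x.
Proof. by move=> xW zW; rewrite -[a *: x]addr0 ip_linear_r ?mem0v // ip0r ?addr0. Qed.

Lemma ipDr {x y z} : x \in W -> y \in W -> z \in W -> ip z (x + y) = ip z x + ip z y.
Proof. by move=> xW yW zW; rewrite -{1}[x]scale1r ip_linear_r // mul1r. Qed.

Lemma ipNr {x z} : x \in W -> z \in W -> ip z (- x) = - ip z x.
Proof. by move=> xW zW; rewrite -scaleN1r ipZr // mulN1r. Qed.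

Lemma ip_sumr {I : Type} {r : seq I} {P : pred I} {F : I -> 'cV[R]_n} {z} :
  (forall i, P i -> F i \in W) -> z \in W ->
  ip z (\sum_(i <- r | P i) F i) = \sum_(i <- r | P i) ip z (F i).
Proof.
move=> FW zW; elim: r => [|i r IH]; first by rewrite !big_nil ip0r.
rewrite !big_cons; case: ifP => // Pi.
by rewrite ipDr ?FW ?IH // rpred_sum.
Qed.

Lemma ip_sumr_tail {z} {v : nat -> 'cV[R]_n} {a : nat -> R} {p q} :
  (p <= q)%N -> z \in W -> (forall k, (k < q)%N -> v k \in W) ->
  (forall k, (k < p)%N -> ip z (v k) = 0) ->
  ip z (\sum_(k < q) a k *: v k) = \sum_(p <= k < q) ip z (v k) * a k.
Proof.
move=> pq zW vW z_perp; rewrite (ip_sumr _ zW) => [|k _]; last by rewrite memvZ ?vW.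
rewrite -(big_mkord xpredT (fun k => ip z (a k *: v k))) (big_cat_nat (leq0n p) pq) /=.
rewrite big_nat_cond big1 ?add0r => [|k /andP[/andP[_ kp] _]]; last first.
  by rewrite ipZr ?vW ?z_perp ?mulr0 // (leq_trans kp).
by apply: eq_big_nat => k /andP[_ kq]; rewrite ipZr ?vW // mulrC.
Qed.

End InnerProduct.

Section OrthonormalFamily.
Context {R : realType} {n : nat} {W : {vspace 'cV[R]_n}}.
Context {ip : 'cV[R]_n -> 'cV[R]_n -> R}.
Hypothesis ipW : inner_product_on W ip.
Context {u : nat -> 'cV[R]_n} {N : nat}.
Hypothesis u_orthonormal : forall k l, (k < N)%N -> (l < N)%N ->
  ip (u k) (u l) = (if k == l then 1 else 0).
Hypothesis uW : forall k, (k < N)%N -> u k \in W.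

Local Notation span_u p := <<[seq u k | k <- iota 0 p]>>%VS.

Lemma ip_orthonormal_sum p l (a : nat -> R) : (p <= N)%N -> (l < N)%N ->
  ip (u l) (\sum_(k < p) a k *: u k) = if (l < p)%N then a l else 0.
Proof.
move=> pN lN; have ulW := uW l lN.
have ukW (k : 'I_p) : u k \in W by apply/uW/(leq_trans _ pN).
rewrite (ip_sumr ipW) // => [|k _]; last by rewrite memvZ.
rewrite -[RHS](@big_ord1_eq _ 0 +%R a l p) [RHS]big_mkcond; apply: eq_bigr => k _.
rewrite (ipZr ipW) // u_orthonormal ?(leq_trans (ltn_ord k) pN) // eq_sym.
by case: eqP; rewrite ?mulr1 ?mulr0.
Qed.

Lemma orthonormal_expansion {p v} : (p <= N)%N -> v \in span_u p ->
  v = \sum_(k < p) ip (u k) v *: u k.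
Proof.
move=> pN /memv_span_iota[a va]; rewrite {1}va; apply: eq_bigr => k _.
by rewrite va ip_orthonormal_sum ?ltn_ord // (leq_trans _ pN).
Qed.

Lemma ip_orthonormal_span_eq0 {p l v} : (p <= l < N)%N -> v \in span_u p ->
  ip (u l) v = 0.
Proof.
case/andP=> pl lN /memv_span_iota[a ->].
by rewrite ip_orthonormal_sum ?(leq_trans pl (ltnW lN)) // ltnNge pl.
Qed.

Lemma parseval {v} : v \in span_u N -> ip v v = \sum_(k < N) ip (u k) v ^+ 2.
Proof.
move=> vN; have vW : v \in W.
  apply: subvP _ _ vN; apply/span_subvP => _ /mapP[k + ->].
  by rewrite mem_iota add0n => /andP[_ /uW].
rewrite {2}(orthonormal_expansion (leqnn N) vN) (ip_sumr ipW) // => [|k _]; last first.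
  by rewrite memvZ ?uW.
apply: eq_bigr => k _; case: ipW => sym _ _.
by rewrite (ipZr ipW) ?uW // sym ?uW // expr2.
Qed.

Lemma parseval_tail {p v} : (p <= N)%N -> v \in span_u N ->
  (forall l, (l < p)%N -> ip (u l) v = 0) ->
  ip v v = \sum_(p <= l < N) ip (u l) v ^+ 2.
Proof.
move=> pN vN v_perp; rewrite (parseval vN).
rewrite -(big_mkord xpredT (fun l => ip (u l) v ^+ 2)) (big_cat_nat (leq0n p) pN) /=.
by rewrite big_nat_cond big1 ?add0r // => l /andP[/andP[_ lp] _]; rewrite v_perp ?expr0n.
Qed.

End OrthonormalFamily.

Section NestedBasis.
Context {R : realType} {n : nat} {V : nat -> {vspace 'cV[R]_n}} {d : nat -> nat}.
Context {u : nat -> 'cV[R]_n} {m : nat}.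
Hypothesis d0 : d 0 = 0%N.
Hypothesis dE : forall i, (0 < i)%N -> d i = \dim (V i).
Hypothesis m_gt0 : (0 < m)%N.
Hypothesis Vinc : forall i, (1 <= i <= m)%N -> (V i <= V i.+1)%VS.
Hypothesis basis : forall i, (1 <= i <= m.+1)%N ->
  basis_of (V i) [seq u k | k <- iota 0 (d i)].

Lemma nested_span {i} : (1 <= i <= m.+1)%N ->
  V i = <<[seq u k | k <- iota 0 (d i)]>>%VS.
Proof. by move/basis/span_basis. Qed.

Lemma nested_mem {i k} : (1 <= i <= m.+1)%N -> (k < d i)%N -> u k \in V i.
Proof. by move=> im kd; rewrite nested_span // memv_span // map_f // mem_iota. Qed.

Lemma nested_dim_le {i} : (i <= m)%N -> (d i <= d i.+1)%N.
Proof. by case: i => [|i] im; rewrite ?d0 // !dE // dimvS // Vinc. Qed.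

Context {ip : 'cV[R]_n -> 'cV[R]_n -> R}.
Hypothesis ipW : inner_product_on (V m.+1) ip.
Hypothesis u_orthonormal : forall k l, (k < d m.+1)%N -> (l < d m.+1)%N ->
  ip (u k) (u l) = (if k == l then 1 else 0).

Lemma nested_perp {l v} : (d m <= l < d m.+1)%N -> v \in V m -> ip (u l) v = 0.
Proof.
have mSm : (1 <= m <= m.+1)%N by rewrite m_gt0 leqnSn.
have uW k : (k < d m.+1)%N -> u k \in V m.+1 by apply: nested_mem; rewrite leqnn.
move=> lm; rewrite (nested_span mSm).
exact: (ip_orthonormal_span_eq0 ipW u_orthonormal uW lm).
Qed.

Context {A : 'M[R]_n}.
Hypothesis AV : forall i v, (1 <= i <= m)%N -> v \in V i -> A *m v \in V i.+1.

Lemma ip_A_last_block {l} (a : nat -> R) : (d m <= l < d m.+1)%N ->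
  ip (u l) (A *m \sum_(k < d m) a k *: u k) =
  \sum_(d m.-1 <= k < d m) ip (u l) (A *m u k) * a k.
Proof.
move=> lm; have ulW : u l \in V m.+1.
  by apply: nested_mem; rewrite ?leqnn //; case/andP: lm.
have dPm : (d m.-1 <= d m)%N by rewrite -{2}(prednK m_gt0) nested_dim_le ?leq_pred.
rewrite mulmx_sumr; under eq_bigr do rewrite -scalemxAr.
rewrite (ip_sumr_tail (v := fun k => A *m u k) ipW dPm ulW) // => [k kd|k kd].
  by apply: AV; [rewrite m_gt0 leqnn | apply: nested_mem kd; rewrite m_gt0 leqnSn].
apply: nested_perp lm _; have m2 : (1 <= m.-1)%N by move: kd; case: (m.-1); rewrite ?d0.
rewrite -(prednK m_gt0); apply: AV; first by rewrite m2 leq_pred.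
by apply: nested_mem kd; rewrite m2 (leq_trans (leq_pred m)).
Qed.

End NestedBasis.

Theorem corollary3p2 (R : realType) (n : nat) (A : 'M[R]_n) (w : 'cV[R]_n)
    (T : R) (K : nat) (c : nat -> R -> R)
    (m : nat) (V : nat -> {vspace 'cV[R]_n})
    (ip : 'cV[R]_n -> 'cV[R]_n -> R)
    (u : nat -> 'cV[R]_n)
    (y : R -> 'cV[R]_n) (x : R -> nat -> R) :
  let d := fun i : nat => if i is 0 then 0%N else \dim (V i) in
  0 < T ->
  (1 <= m)%N ->
  (forall i, (1 <= i <= m)%N -> (V i <= V i.+1)%VS) ->
  w \in V 1 ->
  (forall i v, (1 <= i <= m)%N -> v \in V i -> A *m v \in V i.+1) ->
  inner_product_on (V m.+1) ip ->
  (* u 0, ..., u (d (m+1) - 1) are the columns of U_{m+1}; they are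
     ip-orthonormal, and the first d i of them form a basis of V i *)
  (forall k l, (k < d m.+1)%N -> (l < d m.+1)%N ->
     ip (u k) (u l) = (if k == l then 1 else 0)) ->
  (forall i, (1 <= i <= m.+1)%N -> basis_of (V i) [seq u k | k <- iota 0 (d i)]) ->
  (* y_m : [0,T] -> V_m, sufficiently differentiable for D *)
  (forall t, 0 <= t <= T -> y t \in V m) ->
  (forall k t, (k < K)%N -> 0 <= t <= T -> derivable (derive1n k y) t 1) ->
  (* Galerkin condition on the residual *)
  (forall t v, 0 <= t <= T -> v \in V m ->
     ip v (- diff_op K c y t - A *m y t + w) = 0) ->
  (* y_m(t) = U_m x_m(t) *)
  (forall t, 0 <= t <= T -> y t = \sum_(k < d m) x t k *: u k) ->
  forall t, 0 <= t <= T ->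
    let r := - diff_op K c y t - A *m y t + w in
    (* beta_m(t)_l = - (U_{m+1}^* A U_m [x_m(t)]_{d_{m-1}+1 : d_m})_l *)
    let beta := fun l : nat =>
      - \sum_(d (m.-1) <= k < d m) ip (u l) (A *m u k) * x t k in
    ip_norm ip r = Num.sqrt (\sum_(d m <= l < d m.+1) beta l ^+ 2).
Proof.
move=> d T0 m1 Vinc w1 AV ipW orth basis yV yder gal yx t tT r beta.
have d0 : d 0 = 0%N by [].
have dE i : (0 < i)%N -> d i = \dim (V i) by case: i.
have mSm : (1 <= m <= m.+1)%N by rewrite m1 leqnSn.
have VmS : (V m <= V m.+1)%VS by rewrite Vinc // m1 leqnn.
have wVm : w \in V m := subvP (subv_chain Vinc mSm) _ w1.
have DyVm : diff_op K c y t \in V m := diff_op_in_vspace T0 yV yder tT.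
have AyW : A *m y t \in V m.+1 by apply: AV; rewrite ?m1 ?leqnn ?yV.
have rAy : r + A *m y t \in V m by rewrite /r addrAC subrK memvD ?memvN.
have rspan : r \in <<[seq u k | k <- iota 0 (d m.+1)]>>%VS.
  by rewrite -(nested_span basis) ?leqnn // -[r](addrK (A *m y t)) memvB // (subvP VmS).
have r_coef l : (d m <= l < d m.+1)%N -> ip (u l) r = beta l.
  move=> lm; have ulW : u l \in V m.+1.
    by apply: (nested_mem basis); rewrite ?leqnn //; case/andP: lm.
  rewrite -[r](addrK (A *m y t)) (ipDr ipW (subvP VmS _ rAy) _ ulW) ?memvN //.
  rewrite (ipNr ipW AyW ulW) (nested_perp m1 basis ipW orth lm rAy) add0r yx //.
  by rewrite (ip_A_last_block d0 dE m1 Vinc basis ipW orth AV).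
have uW k : (k < d m.+1)%N -> u k \in V m.+1.
  by apply: (nested_mem basis); rewrite leqnn.
have dmS := nested_dim_le d0 dE Vinc (leqnn m).
rewrite /ip_norm (parseval_tail ipW orth uW dmS rspan).
  by congr Num.sqrt; apply: eq_big_nat => l lm; rewrite r_coef.
by move=> l lm; apply: gal; rewrite // (nested_mem basis) ?mSm.
Qed.
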